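(* Let $X$ be a complete CAT(0) space, $T:X\to X$ nonexpansive, and $(\gamma_n)$ a sequence of positive reals. Then the family $(R_{T,\gamma_n})_{n\in\mathbb{N}}$ is jointly firmly nonexpansive with respect to $(\gamma_n)$.
   Context: A geodesic space $(X,d)$ is CAT(0) if for all $z\in X$, all geodesics $\gamma:[a,b]\to X$ and all $t\in[0,1]$, $d^2(z,\gamma((1-t)a+tb))\le(1-t)d^2(z,\gamma(a))+td^2(z,\gamma(b))-t(1-t)d^2(\gamma(a),\gamma(b))$; $(1-t)x+ty$ denotes the point at distance $t\,d(x,y)$ from $x$ on the unique geodesic from $x$ to $y$. For $\gamma>0$ and $x\in X$, $R_{T,\gamma}x$ is the unique fixed point of the contraction $y\mapsto\frac1{1+\gamma}x+\frac{\gamma}{1+\gamma}Ty$, i.e. $R_{T,\gamma}x=\frac1{1+\gamma}x+\frac\gamma{1+\gamma}TR_{T,\gamma}x$ (the resolvent of order $\gamma$ of $T$). $(T_n)$ is jointly firmly nonexpansive w.r.t. $(\gamma_n)$ if for all $n,m$, $x,y\in X$, $\alpha,\beta\in[0,1]$ with $(1-\alpha)\gamma_n=(1-\beta)\gamma_m$: $d(T_nx,T_my)\le d((1-\alpha)x+\alpha T_nx,(1-\beta)y+\beta T_my)$. *)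

From Stdlib Require Import Reals Lra ClassicalEpsilon.
Open Scope R_scope.

Section Defs.
Context {X : Type} (d : X -> X -> R).

Definition is_metric : Prop :=
  (forall x y, 0 <= d x y) /\
  (forall x y, d x y = 0 <-> x = y) /\
  (forall x y, d x y = d y x) /\
  (forall x y z, d x z <= d x y + d y z).

Definition complete : Prop :=
  forall u : nat -> X,
    (forall eps, eps > 0 -> exists N, forall n m, (n >= N)%nat -> (m >= N)%nat -> d (u n) (u m) < eps) ->
    exists l, forall eps, eps > 0 -> exists N, forall n, (n >= N)%nat -> d (u n) l < eps.

Definition geodesic (gam : R -> X) (a b : R) : Prop :=
  a <= b /\ forall s t, a <= s <= b -> a <= t <= b -> d (gam s) (gam t) = Rabs (s - t).

Definition geodesic_space : Prop :=
  forall x y, exists gam, geodesic gam 0 (d x y) /\ gam 0 = x /\ gam (d x y) = y.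

Definition CAT0 : Prop :=
  geodesic_space /\
  forall z (gam : R -> X) a b t, geodesic gam a b -> 0 <= t <= 1 ->
    (d z (gam ((1 - t) * a + t * b)))^2 <=
      (1 - t) * (d z (gam a))^2 + t * (d z (gam b))^2 - t * (1 - t) * (d (gam a) (gam b))^2.

(* (1-t)x + t y : the point at distance t d(x,y) from x on the (unique) geodesic from x to y *)
Definition geo_pt (x y : X) (t : R) : X :=
  epsilon (inhabits x) (fun z => exists gam, geodesic gam 0 (d x y) /\ gam 0 = x /\
                                   gam (d x y) = y /\ z = gam (t * d x y)).

Definition nonexpansive (T : X -> X) : Prop := forall x y, d (T x) (T y) <= d x y.

(* resolvent of order g of T: the fixed point of y |-> 1/(1+g) x + g/(1+g) T y *)
Definition resolvent (T : X -> X) (g : R) (x : X) : X :=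
  epsilon (inhabits x) (fun z => z = geo_pt x (T z) (g / (1 + g))).

Definition jointly_firmly_nonexpansive (Tn : nat -> X -> X) (g : nat -> R) : Prop :=
  forall n m x y al be, 0 <= al <= 1 -> 0 <= be <= 1 ->
    (1 - al) * g n = (1 - be) * g m ->
    d (Tn n x) (Tn m y) <= d (geo_pt x (Tn n x) al) (geo_pt y (Tn m y) be).

End Defs.

(* The resolvent u = R_{T,γ} x lies on the geodesic [x, T u] at ratio γ/(1+γ).
   For p = (1-α)x + αu the point u still lies on [p, T u], now at ratio
   γ'/(1+γ') with γ' = (1-α)γ; so under (1-α)γ_n = (1-β)γ_m the resolvents
   u = R_{T,γ_n} x and v = R_{T,γ_m} y sit at the same ratio λ < 1 on [p, T u]
   and [q, T v]. Convexity of the metric along geodesics and nonexpansiveness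
   of T then give d(u,v) <= (1-λ) d(p,q) + λ d(u,v), i.e. d(u,v) <= d(p,q). *)
From Stdlib Require Import Reals Lra Psatz ClassicalEpsilon.
Open Scope R_scope.

Definition resolvent_ratio (g : R) : R := g / (1 + g).

Lemma resolvent_ratio_range g : 0 <= g -> 0 <= resolvent_ratio g < 1.
Proof.
  intros Hg; unfold resolvent_ratio; split.
  - apply Rmult_le_pos; [lra | left; apply Rinv_0_lt_compat; lra].
  - apply Rmult_lt_reg_r with (1 + g); [lra|].
    unfold Rdiv; rewrite Rmult_assoc, Rinv_l; lra.
Qed.

Section Metric.
Variables (X : Type) (d : X -> X -> R).
Hypothesis Hm : is_metric d.

Lemma dist_ge0 x y : 0 <= d x y.
Proof. apply Hm. Qed.

Lemma dist_eq0 x y : d x y = 0 -> x = y.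
Proof. apply Hm. Qed.

Lemma dist_refl x : d x x = 0.
Proof. now apply Hm. Qed.

Lemma dist_sym x y : d x y = d y x.
Proof. apply Hm. Qed.

Lemma dist_triangle x y z : d x z <= d x y + d y z.
Proof. apply Hm. Qed.

Section Contraction.
Variables (F : X -> X) (s : R) (x0 : X).
Hypothesis Hs : 0 <= s < 1.
Hypothesis HF : forall y y', d (F y) (F y') <= s * d y y'.

Let u n := Nat.iter n F x0.
Let C := d (u 1%nat) (u 0%nat).

Lemma contraction_iter_step n : d (u (S n)) (u n) <= s ^ n * C.
Proof.
  induction n as [|n IH]; [rewrite pow_O, Rmult_1_l; apply Rle_refl|].
  apply Rle_trans with (s * d (u (S n)) (u n)); [apply HF|].
  simpl pow; rewrite Rmult_assoc; apply Rmult_le_compat_l; lra.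
Qed.

Lemma contraction_iter_dist n k :
  (1 - s) * d (u (n + k)%nat) (u n) <= C * s ^ n * (1 - s ^ k).
Proof.
  induction k as [|k IH].
  - rewrite Nat.add_0_r, dist_refl; simpl; lra.
  - replace (n + S k)%nat with (S (n + k)) by lia.
    pose proof (dist_triangle (u (S (n + k))) (u (n + k)%nat) (u n)).
    pose proof (contraction_iter_step (n + k)).
    rewrite pow_add in *; simpl pow.
    assert (0 <= 1 - s) by lra.
    nra.
Qed.

Lemma contraction_iter_cauchy eps : eps > 0 ->
  exists N, forall n m, (n >= N)%nat -> (m >= N)%nat -> d (u n) (u m) < eps.
Proof.
  intros Heps.
  assert (HC : 0 <= C) by apply dist_ge0.
  destruct (pow_lt_1_zero s ltac:(rewrite Rabs_pos_eq; lra) (eps * (1 - s) / (C + 1)))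
    as [N HN]; [apply Rdiv_lt_0_compat; nra|].
  assert (Hdist : forall a b, (a >= N)%nat -> (a <= b)%nat -> d (u b) (u a) < eps).
  { intros a b Ha Hab.
    replace b with (a + (b - a))%nat by lia.
    pose proof (contraction_iter_dist a (b - a)).
    pose proof (pow_le s a ltac:(lra)); pose proof (pow_le s (b - a) ltac:(lra)).
    specialize (HN a Ha); rewrite Rabs_pos_eq in HN by lra.
    assert (s ^ a * (C + 1) < eps * (1 - s)).
    { apply (Rmult_lt_compat_r (C + 1)) in HN; [|lra].
      unfold Rdiv in HN; rewrite Rmult_assoc, Rinv_l in HN; lra. }
    assert (0 <= C * s ^ a * s ^ (b - a)) by (apply Rmult_le_pos; [apply Rmult_le_pos|]; lra).
    apply Rmult_lt_reg_l with (1 - s); nra. }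
  exists N; intros n m Hn Hmn.
  destruct (Nat.le_ge_cases n m).
  - rewrite dist_sym; auto.
  - auto.
Qed.

Lemma contraction_fixed_point : complete d -> exists z, z = F z.
Proof.
  intros Hcomp.
  destruct (Hcomp u contraction_iter_cauchy) as [l Hl]; exists l.
  apply eq_sym, dist_eq0.
  destruct (Req_dec (d (F l) l) 0) as [E|E]; [exact E|exfalso].
  pose proof (dist_ge0 (F l) l).
  destruct (Hl (d (F l) l / 2) ltac:(lra)) as [N HN].
  pose proof (HN N ltac:(lia)); pose proof (HN (S N) ltac:(lia)).
  pose proof (dist_triangle (F l) (u (S N)) l).
  pose proof (HF l (u N)); rewrite (dist_sym l) in *.
  pose proof (dist_ge0 (u N) l).
  change (u (S N)) with (F (u N)) in *.
  nra.
Qed.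

End Contraction.

Section CAT0.
Hypothesis Hc : CAT0 d.

Lemma geo_pt_spec x y t : exists gam, geodesic d gam 0 (d x y) /\ gam 0 = x /\
  gam (d x y) = y /\ geo_pt d x y t = gam (t * d x y).
Proof.
  unfold geo_pt.
  apply (epsilon_spec (inhabits x) (fun z => exists gam, geodesic d gam 0 (d x y) /\
    gam 0 = x /\ gam (d x y) = y /\ z = gam (t * d x y))).
  destruct (proj1 Hc x y) as [gam [G [G0 G1]]].
  exists (gam (t * d x y)), gam; auto.
Qed.

Lemma CAT0_ineq_geo_pt x y t z : 0 <= t <= 1 ->
  d z (geo_pt d x y t) ^ 2 <= (1 - t) * d z x ^ 2 + t * d z y ^ 2 - t * (1 - t) * d x y ^ 2.
Proof.
  intros Ht; destruct (geo_pt_spec x y t) as [gam [G [G0 [G1 ->]]]].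
  pose proof (proj2 Hc z gam 0 (d x y) t G Ht) as H.
  replace ((1 - t) * 0 + t * d x y) with (t * d x y) in H by ring.
  now rewrite G0, G1 in H.
Qed.

Lemma dist_geo_pt_l x y t : 0 <= t <= 1 -> d x (geo_pt d x y t) = t * d x y.
Proof.
  intros Ht; destruct (geo_pt_spec x y t) as [gam [[_ G] [G0 [G1 ->]]]].
  pose proof (dist_ge0 x y).
  rewrite <- G0 at 1; rewrite G by nra.
  rewrite Rabs_left1 by nra; ring.
Qed.

Lemma dist_geo_pt_r x y t : 0 <= t <= 1 -> d (geo_pt d x y t) y = (1 - t) * d x y.
Proof.
  intros Ht; destruct (geo_pt_spec x y t) as [gam [[_ G] [G0 [G1 ->]]]].
  pose proof (dist_ge0 x y).
  rewrite <- G1 at 2; rewrite G by nra.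
  rewrite Rabs_left1 by nra; ring.
Qed.

Lemma geo_pt_unique x y t z : 0 <= t <= 1 ->
  d x z = t * d x y -> d z y = (1 - t) * d x y -> geo_pt d x y t = z.
Proof.
  intros Ht Hxz Hzy.
  pose proof (CAT0_ineq_geo_pt x y t z Ht) as H.
  rewrite (dist_sym z x), Hxz, Hzy in H.
  pose proof (dist_ge0 z (geo_pt d x y t)).
  apply eq_sym, dist_eq0; nra.
Qed.

Lemma geo_pt_rev x y t : 0 <= t <= 1 -> geo_pt d x y t = geo_pt d y x (1 - t).
Proof.
  intros Ht; symmetry; apply geo_pt_unique; [lra| |].
  - rewrite dist_sym, dist_geo_pt_r, dist_sym by lra; ring.
  - rewrite dist_sym, dist_geo_pt_l, (dist_sym x y) by lra; ring.
Qed.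

Lemma geo_pt_contract x a b t : 0 <= t <= 1 ->
  d (geo_pt d x a t) (geo_pt d x b t) <= t * d a b.
Proof.
  intros Ht.
  pose proof (CAT0_ineq_geo_pt x b t (geo_pt d x a t) Ht) as Hp.
  pose proof (CAT0_ineq_geo_pt x a t b Ht) as Hb.
  rewrite (dist_sym _ x), (dist_geo_pt_l x a t Ht), (dist_sym _ b) in Hp.
  rewrite (dist_sym b x), (dist_sym b a) in Hb.
  pose proof (dist_ge0 (geo_pt d x a t) (geo_pt d x b t)); pose proof (dist_ge0 a b).
  assert (t * d b (geo_pt d x a t) ^ 2 <=
          t * ((1 - t) * d x b ^ 2 + t * d a b ^ 2 - t * (1 - t) * d x a ^ 2))
    by (apply Rmult_le_compat_l; lra).
  apply Rsqr_incr_0_var; [unfold Rsqr; nra | nra].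
Qed.

Lemma geo_pt_convex p q a b t : 0 <= t <= 1 ->
  d (geo_pt d p a t) (geo_pt d q b t) <= (1 - t) * d p q + t * d a b.
Proof.
  intros Ht.
  pose proof (dist_triangle (geo_pt d p a t) (geo_pt d p b t) (geo_pt d q b t)).
  pose proof (geo_pt_contract p a b t Ht).
  pose proof (geo_pt_contract b p q (1 - t) ltac:(lra)).
  rewrite <- !geo_pt_rev in * by lra.
  lra.
Qed.

Lemma geo_pt_restart x w u g al : 0 <= g -> 0 <= al <= 1 ->
  u = geo_pt d x w (resolvent_ratio g) ->
  u = geo_pt d (geo_pt d x u al) w (resolvent_ratio ((1 - al) * g)).
Proof.
  intros Hg Hal Hu.
  assert (Hg' : 0 <= (1 - al) * g) by nra.
  pose proof (resolvent_ratio_range g Hg); pose proof (resolvent_ratio_range _ Hg').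
  set (s := resolvent_ratio g) in *; set (t := resolvent_ratio ((1 - al) * g)) in *.
  set (D := d x w); set (p := geo_pt d x u al).
  assert (Hxu : d x u = s * D) by (rewrite Hu; apply dist_geo_pt_l; lra).
  assert (Huw : d u w = (1 - s) * D) by (rewrite Hu at 1; apply dist_geo_pt_r; lra).
  assert (Hxp : d x p = al * (s * D)) by (unfold p; rewrite dist_geo_pt_l, Hxu; lra).
  assert (Hpu : d p u = (1 - al) * (s * D)) by (unfold p; rewrite dist_geo_pt_r, Hxu; lra).
  pose proof (dist_triangle p u w); pose proof (dist_triangle x p w) as Hxpw.
  fold D in Hxpw.
  assert (Hpw : d p w = (1 - al * s) * D) by lra.
  assert (Ht : t * (1 - al * s) = (1 - al) * s)
    by (unfold t, s, resolvent_ratio; field; split; nra).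
  symmetry; apply geo_pt_unique; [lra| |].
  - rewrite Hpu, Hpw.
    transitivity (t * (1 - al * s) * D); [rewrite Ht|]; ring.
  - rewrite Huw, Hpw.
    transitivity ((1 - al * s) * D - t * (1 - al * s) * D); [rewrite Ht|]; ring.
Qed.

Lemma dist_le_of_geo_pt_fixed p q u v w z t : 0 <= t < 1 ->
  u = geo_pt d p w t -> v = geo_pt d q z t -> d w z <= d u v -> d u v <= d p q.
Proof.
  intros Ht Hu Hv Hwz.
  pose proof (geo_pt_convex p q w z t ltac:(lra)).
  rewrite <- Hu, <- Hv in *.
  nra.
Qed.

End CAT0.

Lemma resolvent_eq T g x : complete d -> CAT0 d -> nonexpansive d T -> 0 <= g ->
  resolvent d T g x = geo_pt d x (T (resolvent d T g x)) (resolvent_ratio g).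
Proof.
  intros Hcomp Hc HT Hg.
  apply (epsilon_spec (inhabits x) (fun z => z = geo_pt d x (T z) (g / (1 + g)))).
  pose proof (resolvent_ratio_range g Hg).
  set (s := resolvent_ratio g) in *.
  apply (contraction_fixed_point (fun y => geo_pt d x (T y) s) s x); [lra| |exact Hcomp].
  intros y y'.
  apply Rle_trans with (s * d (T y) (T y')); [apply geo_pt_contract; auto; lra|].
  apply Rmult_le_compat_l; [lra|apply HT].
Qed.

End Metric.

Theorem proposition3p19 (X : Type) (d : X -> X -> R) (T : X -> X) (g : nat -> R) :
  is_metric d -> complete d -> CAT0 d -> nonexpansive d T ->
  (forall n, 0 < g n) ->
  jointly_firmly_nonexpansive d (fun n => resolvent d T (g n)) g.
Proof.
  intros Hm Hcomp Hc HT Hg n m x y al be Hal Hbe Hw; cbv beta.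
  set (u := resolvent d T (g n) x); set (v := resolvent d T (g m) y).
  pose proof (Hg n); pose proof (Hg m).
  assert (Hu : u = geo_pt d (geo_pt d x u al) (T u) (resolvent_ratio ((1 - al) * g n))).
  { apply geo_pt_restart; auto; try lra. apply resolvent_eq; auto; lra. }
  assert (Hv : v = geo_pt d (geo_pt d y v be) (T v) (resolvent_ratio ((1 - al) * g n))).
  { rewrite Hw; apply geo_pt_restart; auto; try lra. apply resolvent_eq; auto; lra. }
  assert (Hc' : 0 <= (1 - al) * g n) by nra.
  exact (dist_le_of_geo_pt_fixed X d Hm Hc _ _ _ _ _ _ _
           (resolvent_ratio_range _ Hc') Hu Hv (HT u v)).
Qed.
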